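(* Consider an instance of the destructive weighted-\$-protection problem. Suppose the defender succeeds by awarding a set $\mathcal{V}_F\subseteq\mathcal{V}$ with $\sum_{v_j\in\mathcal{V}_F}p_j^a\le F$. If $v_{j'}\prec v_j$, $v_{j'}\in\mathcal{V}_F$ and $v_j\notin\mathcal{V}_F$, then the defender also succeeds by awarding $(\mathcal{V}_F\setminus\{v_{j'}\})\cup\{v_j\}$.
   Context: Election model. Candidates $\mathcal{C}=\{c_1,\dots,c_m\}$, voters $\mathcal{V}=\{v_1,\dots,v_n\}$; voter $v_j$ has a preference list $\tau_j$ (a linear order of $\mathcal{C}$), weight $w_j\in\mathbb{Z}_{>0}$, awarding price $p_j^a\in\mathbb{Z}_{>0}$, bribing price $p_j^b\in\mathbb{Z}_{>0}$. A scoring rule $\alpha=(\alpha_1\ge\cdots\ge\alpha_m)$ of nonnegative integers gives the candidate at position $z$ of $v_j$'s list $w_j\alpha_z$ points; total score is the sum over voters. In the destructive weighted-\$-protection problem, $c_m$ has maximum total score without bribery; there is a defense budget $F$ and an attack budget $B$. Given awarded voters $\mathcal{V}_F$, the attacker may choose $\mathcal{V}_B\subseteq\mathcal{V}\setminus\mathcal{V}_F$ with $\sum_{v_j\in\mathcal{V}_B}p_j^b\le B$ and replace each list in $\mathcal{V}_B$ by an arbitrary list; the defender succeeds with $\mathcal{V}_F$ (of total awarding price at most $F$) if no such bribery makes some $c\neq c_m$ obtain a strictly higher total score than $c_m$. Dominance: $v_{j'}\prec v_j$ if either (i) $\tau_j=\tau_{j'}$, $w_j\ge w_{j'}$, $p_j^a\le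 p_{j'}^a$, $p_j^b\le p_{j'}^b$ with at least one of these three inequalities strict; or (ii) $\tau_j=\tau_{j'}$, $w_j=w_{j'}$, $p_j^a=p_{j'}^a$, $p_j^b=p_{j'}^b$ and $j'<j$. *)

From mathcomp Require Import all_boot all_fingroup.
Set Implicit Arguments. Unset Strict Implicit. Unset Printing Implicit Defensive.

(* Candidates are 'I_m, voters are 'I_n.  A preference list of a voter is a
   permutation tau : {perm 'I_m} mapping a position z (0-based, 0 = top)
   to the candidate at that position.  The position of candidate c is
   (tau^-1) c.  alpha : 'I_m -> nat is the scoring vector (0-based). *)

Definition score (m n : nat) (alpha : 'I_m -> nat) (w : 'I_n -> nat)
  (tau : 'I_n -> {perm 'I_m}) (c : 'I_m) : nat :=
  \sum_(j < n) w j * alpha ((tau j)^-1%g c).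

Definition defender_succeeds (m n : nat) (alpha : 'I_m -> nat) (w : 'I_n -> nat)
  (tau : 'I_n -> {perm 'I_m}) (pa pb : 'I_n -> nat) (F B : nat) (cm : 'I_m)
  (VF : {set 'I_n}) : Prop :=
  \sum_(j in VF) pa j <= F /\
  forall (VB : {set 'I_n}) (tau' : 'I_n -> {perm 'I_m}),
    [disjoint VB & VF] ->
    \sum_(j in VB) pb j <= B ->
    (forall j, j \notin VB -> tau' j = tau j) ->
    forall c : 'I_m, c != cm -> score alpha w tau' c <= score alpha w tau' cm.

(* Dominance: dominated j' j  means  v_{j'} < v_j. *)
Definition dominated (m n : nat) (w : 'I_n -> nat) (tau : 'I_n -> {perm 'I_m})
  (pa pb : 'I_n -> nat) (j' j : 'I_n) : bool :=
  (tau j == tau j') &&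
  ( [&& w j' <= w j, pa j <= pa j', pb j <= pb j'
      & [|| w j' < w j, pa j < pa j' | pb j < pb j'] ]
  || [&& w j == w j', pa j == pa j', pb j == pb j' & (j' < j)%N ]).

From mathcomp Require Import all_boot all_fingroup zify.
Set Implicit Arguments. Unset Strict Implicit. Unset Printing Implicit Defensive.

(* Swapping j' for j keeps the awarding budget.  Against the new awarded set,
   an attack that leaves j' alone was already an attack against VF.  Otherwise
   move its bribe from j' to j (cheaper, as pb j <= pb j'): j' votes sincerely
   again and j ranks c first and c_m last.  As j and j' have the same sincere
   list and w j' <= w j, this attack on VF favours c over c_m at least as much,
   so c does not beat c_m in the original attack either. *)

Lemma perm_map2 (T : finType) (x1 x2 y1 y2 : T) :
  x1 != x2 -> y1 != y2 -> exists p : {perm T}, p x1 = y1 /\ p x2 = y2.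
Proof.
move=> x12 y12; set t := tperm x1 y1; have tx1 : t x1 = y1 := tpermL x1 y1.
exists (t * tperm (t x2) y2)%g; rewrite !permM tpermL; split=> //.
rewrite tpermD // tx1 1?eq_sym //.
by rewrite -tx1 (inj_eq perm_inj).
Qed.

Lemma perm_top_bottom m (c d : 'I_m.+1) :
  c != d -> exists p : {perm 'I_m.+1}, p c = ord0 /\ p d = ord_max.
Proof. by case: m c d => [|m] c d; rewrite ?ord1 ?eqxx // => /perm_map2; apply. Qed.

Section SetExchange.
Variables (T : finType) (A B : {set T}) (x y : T).

Lemma leq_sum_setD1U1 (f : T -> nat) :
  x \in A -> y \notin A -> f y <= f x ->
  \sum_(k in (A :\ x) :|: [set y]) f k <= \sum_(k in A) f k.
Proof.
move=> xA yA fyx; have yAx : y \notin A :\ x by rewrite inE negb_and yA orbT.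
by rewrite setUC big_setU1 //= (big_setD1 x xA) leq_add2r.
Qed.

Lemma disjoint_setD1U1r :
  x \notin B -> [disjoint B & (A :\ x) :|: [set y]] -> [disjoint B & A].
Proof.
rewrite !disjoints_subset => xB /subsetP BC; apply/subsetP=> z zB.
have := BC z zB; rewrite !inE negb_or negb_and negbK => /andP[+ _].
by case: eqP zB xB => [-> -> //|_ _ _ /=].
Qed.

Lemma disjoint_setD1U1 :
  y \notin A -> [disjoint B & (A :\ x) :|: [set y]] ->
  [disjoint (B :\ x) :|: [set y] & A].
Proof.
rewrite !disjoints_subset => yA /subsetP BC; apply/subsetP=> z.
rewrite !inE => /orP[/andP[zx /BC]|/eqP -> //].
by rewrite !inE zx /= negb_or => /andP[].
Qed.

End SetExchange.

Lemma weighted_exchange a b x y u v top bot :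
  b <= a -> x <= top -> u <= top -> bot <= y -> bot <= v ->
  a * x + b * u + (a * bot + b * y) <= a * top + b * x + (a * y + b * v).
Proof. nia. Qed.

Definition transfer_bribe {n : nat} {L : Type} (tau : 'I_n -> L) (j j' : 'I_n) (rho : L) :=
  fun k => if k == j then rho else if k == j' then tau j else tau k.

Lemma transfer_bribe_unbribed n (L : Type) (tau tau' : 'I_n -> L) (VB : {set 'I_n})
    (j j' : 'I_n) (rho : L) :
  tau j = tau j' -> j \notin VB -> (forall k, k \notin VB -> tau' k = tau k) ->
  forall k, k \notin (VB :\ j') :|: [set j] -> transfer_bribe tau' j j' rho k = tau k.
Proof.
move=> tau_jj' jVB unbribed k; rewrite !inE negb_or negb_and negbK.
case/andP=> kVB /negbTE kj; rewrite /transfer_bribe kj.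
by case: eqP kVB => [-> _|_ /= /unbribed //]; rewrite unbribed.
Qed.

Section Score.
Variables (m n : nat) (alpha : 'I_m -> nat) (w : 'I_n -> nat).

Lemma score_pair tau j j' c : j != j' ->
  score alpha w tau c = w j * alpha ((tau j)^-1%g c) + w j' * alpha ((tau j')^-1%g c)
    + \sum_(k | (k != j) && (k != j')) w k * alpha ((tau k)^-1%g c).
Proof. by move=> jj'; rewrite /score (bigD1 j) //= (bigD1 j') 1?eq_sym //= addnA. Qed.

Lemma score_transfer_bribe (tau : 'I_n -> {perm 'I_m}) (j j' : 'I_n) (rho : {perm 'I_m}) c d :
  j != j' -> w j' <= w j ->
  (forall z, alpha z <= alpha (rho^-1%g c)) -> (forall z, alpha (rho^-1%g d) <= alpha z) ->
  score alpha w tau c + score alpha w (transfer_bribe tau j j' rho) d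
    <= score alpha w (transfer_bribe tau j j' rho) c + score alpha w tau d.
Proof.
move=> jj' wj' top bot; set tau'' := transfer_bribe tau j j' rho.
rewrite !(@score_pair _ j j' _ jj').
have rest e : \sum_(k | (k != j) && (k != j')) w k * alpha ((tau'' k)^-1%g e)
            = \sum_(k | (k != j) && (k != j')) w k * alpha ((tau k)^-1%g e).
  by apply: eq_bigr => k /andP[/negbTE kj /negbTE kj']; rewrite /tau'' /transfer_bribe kj kj'.
rewrite !rest /tau'' /transfer_bribe eqxx eq_sym (negbTE jj') eqxx.
have := @weighted_exchange (w j) (w j') (alpha ((tau j)^-1%g c)) (alpha ((tau j)^-1%g d))
  (alpha ((tau j')^-1%g c)) (alpha ((tau j')^-1%g d)) _ _ wj' (top _) (top _) (bot _) (bot _).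
lia.
Qed.

End Score.

Lemma dominatedW m n (w pa pb : 'I_n -> nat) (tau : 'I_n -> {perm 'I_m}) j' j :
  dominated w tau pa pb j' j ->
  [/\ tau j = tau j', w j' <= w j, pa j <= pa j' & pb j <= pb j'].
Proof. by case/andP=> /eqP-> /orP[/and4P[]|/and4P[/eqP-> /eqP-> /eqP->]]. Qed.

Theorem lemma6 (m' n : nat) (alpha : 'I_m'.+1 -> nat)
  (alpha_noninc : forall z z' : 'I_m'.+1, z <= z' -> alpha z' <= alpha z)
  (w pa pb : 'I_n -> nat)
  (w_pos : forall j, 0 < w j) (pa_pos : forall j, 0 < pa j) (pb_pos : forall j, 0 < pb j)
  (tau : 'I_n -> {perm 'I_m'.+1}) (F B : nat)
  (cm_max : forall c : 'I_m'.+1, score alpha w tau c <= score alpha w tau ord_max)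
  (VF : {set 'I_n}) (j' j : 'I_n) :
  defender_succeeds alpha w tau pa pb F B ord_max VF ->
  dominated w tau pa pb j' j ->
  j' \in VF -> j \notin VF ->
  defender_succeeds alpha w tau pa pb F B ord_max ((VF :\ j') :|: [set j]).
Proof.
move=> [budgetF succ] /dominatedW[tau_jj' wj' paj' pbj'] j'VF jVF.
have jj' : j != j' by apply: contraNneq jVF => ->.
split=> [|VB tau' disVB budgetB unbribed c c_ne].
  exact: leq_trans (leq_sum_setD1U1 (f := pa) j'VF jVF paj') budgetF.
have jVB : j \notin VB by rewrite (disjointFl disVB) // !inE eqxx orbT.
have [j'VB|j'VB] := boolP (j' \in VB); last first.
  exact: succ VB tau' (disjoint_setD1U1r j'VB disVB) budgetB unbribed c c_ne.
have [p [p_c p_cm]] := perm_top_bottom c_ne.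
have top z : alpha z <= alpha ((p^-1)^-1%g c) by rewrite invgK p_c alpha_noninc.
have bot z : alpha ((p^-1)^-1%g ord_max) <= alpha z.
  by rewrite invgK p_cm alpha_noninc // leq_ord.
have := score_transfer_bribe tau' jj' wj' top bot.
set tau'' := transfer_bribe tau' j j' p^-1%g.
suff : score alpha w tau'' c <= score alpha w tau'' ord_max by lia.
apply: (succ ((VB :\ j') :|: [set j])) c_ne.
- exact: disjoint_setD1U1.
- exact: leq_trans (leq_sum_setD1U1 (f := pb) j'VB jVB pbj') budgetB.
- exact: transfer_bribe_unbribed.
Qed.
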